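(* Let $k>0$ be sufficiently large and let $f_k$ be the standard map. For $z\in\mathbb T^2$ let $e^{(1)}(z)$ be the most contracted direction of $Df_k(z)$ and $e^{(-1)}(z)$ the most contracted direction of $D(f_k^{-1})(z)$. Then there is no point $z=(x,y)$ with $y\in[0,\delta^-]\cup[1-\delta^-,1]$ at which $e^{(1)}(z)$ and $e^{(-1)}(z)$ span the same line (i.e. there are no tangencies between the foliations $\mathcal E^{(1)}$ and $\mathcal E^{(-1)}$ in this region).
   Context: The standard map is $f_k(x,y)=(x+k\sin(2\pi y),\,x+y+k\sin(2\pi y))\bmod 1$ on $\mathbb T^2=\mathbb R^2/\mathbb Z^2$. For an invertible linear map $A$ with $\min_{\|v\|=1}\|Av\|<\max_{\|v\|=1}\|Av\|$, its most contracted direction is the line spanned by a unit vector minimizing $\|Av\|$; $\mathcal E^{(\pm1)}$ denote the foliations tangent to $e^{(\pm1)}$. $\delta^-=\frac1{2\pi}\cos^{-1}\!\left(\frac{\sqrt3-1}{4\pi k}\right)$ with $\cos^{-1}\in[0,\pi]$. *)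

From Stdlib Require Import Reals Lra.
Open Scope R_scope.

(** Vectors of R^2 and 2x2 real matrices (row-major: (a, b, c, d) = [[a,b],[c,d]]). *)
Definition vec2 := (R * R)%type.
Definition mat2 := (R * R * R * R)%type.

Definition mat_apply (A : mat2) (v : vec2) : vec2 :=
  let '(a, b, c, d) := A in (a * fst v + b * snd v, c * fst v + d * snd v).

Definition norm2 (v : vec2) : R := sqrt (fst v * fst v + snd v * snd v).

Definition most_contracted (A : mat2) (v : vec2) : Prop :=
  norm2 v = 1 /\ forall w : vec2, norm2 w = 1 -> norm2 (mat_apply A v) <= norm2 (mat_apply A w).

(** Two nonzero vectors of R^2 span the same line iff their determinant vanishes. *)
Definition same_line (v w : vec2) : Prop := fst v * snd w - snd v * fst w = 0.

(** Lift of the standard map f_k to R^2 (f_k on T^2 is this map mod Z^2). *)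
Definition std_map (k : R) (z : vec2) : vec2 :=
  let '(x, y) := z in
  (x + k * sin (2 * PI * y), x + y + k * sin (2 * PI * y)).

Definition std_map_inv (k : R) (z : vec2) : vec2 :=
  let '(x, y) := z in
  (x - k * sin (2 * PI * (y - x)), y - x).

Lemma std_map_inv_l k z : std_map_inv k (std_map k z) = z.
Proof.
  destruct z as [x y]; unfold std_map, std_map_inv; f_equal;
  replace (x + y + k * sin (2 * PI * y) - (x + k * sin (2 * PI * y))) with y by ring; ring.
Qed.

Lemma std_map_inv_r k z : std_map k (std_map_inv k z) = z.
Proof.
  destruct z as [x y]; unfold std_map, std_map_inv; f_equal;
  replace (x - k * sin (2 * PI * (y - x)) + (y - x)) with (y - k * sin (2 * PI * (y - x))) by ring;
  ring.
Qed.

Definition Df (k : R) (z : vec2) : mat2 :=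
  let '(x, y) := z in
  let c := 2 * PI * k * cos (2 * PI * y) in
  (1, c, 1, 1 + c).

Definition Dfinv (k : R) (z : vec2) : mat2 :=
  let '(x, y) := z in
  let c := 2 * PI * k * cos (2 * PI * (y - x)) in
  (1 + c, - c, -1, 1).

Lemma Df_entries k x y :
  derivable_pt_lim (fun t => fst (std_map k (t, y))) x 1 /\
  derivable_pt_lim (fun t => fst (std_map k (x, t))) y (2 * PI * k * cos (2 * PI * y)) /\
  derivable_pt_lim (fun t => snd (std_map k (t, y))) x 1 /\
  derivable_pt_lim (fun t => snd (std_map k (x, t))) y (1 + 2 * PI * k * cos (2 * PI * y)).
Proof.
  simpl. repeat split.
  - replace 1 with (1 + 0) by ring. apply derivable_pt_lim_plus;
      [apply derivable_pt_lim_id | apply derivable_pt_lim_const].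
  - replace (2 * PI * k * cos (2 * PI * y)) with (0 + k * (cos (2 * PI * y) * (2 * PI * 1))) by ring.
    apply derivable_pt_lim_plus; [apply derivable_pt_lim_const|].
    apply derivable_pt_lim_scal.
    apply (derivable_pt_lim_comp (fun t => 2 * PI * t) sin).
    + apply derivable_pt_lim_scal, derivable_pt_lim_id.
    + apply derivable_pt_lim_sin.
  - replace 1 with (1 + 0 + 0) by ring. apply derivable_pt_lim_plus; [apply derivable_pt_lim_plus|];
      [apply derivable_pt_lim_id | apply derivable_pt_lim_const | apply derivable_pt_lim_const].
  - replace (1 + 2 * PI * k * cos (2 * PI * y)) with (0 + 1 + k * (cos (2 * PI * y) * (2 * PI * 1))) by ring.
    apply derivable_pt_lim_plus; [apply derivable_pt_lim_plus|];
      [apply derivable_pt_lim_const | apply derivable_pt_lim_id|].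
    apply derivable_pt_lim_scal.
    apply (derivable_pt_lim_comp (fun t => 2 * PI * t) sin).
    + apply derivable_pt_lim_scal, derivable_pt_lim_id.
    + apply derivable_pt_lim_sin.
Qed.

Lemma Dfinv_entries k x y :
  derivable_pt_lim (fun t => fst (std_map_inv k (t, y))) x (1 + 2 * PI * k * cos (2 * PI * (y - x))) /\
  derivable_pt_lim (fun t => fst (std_map_inv k (x, t))) y (- (2 * PI * k * cos (2 * PI * (y - x)))) /\
  derivable_pt_lim (fun t => snd (std_map_inv k (t, y))) x (-1) /\
  derivable_pt_lim (fun t => snd (std_map_inv k (x, t))) y 1.
Proof.
  simpl. repeat split.
  - replace (1 + 2 * PI * k * cos (2 * PI * (y - x)))
      with (1 - k * (cos (2 * PI * (y - x)) * (2 * PI * (0 - 1)))) by ring.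
    apply derivable_pt_lim_minus; [apply derivable_pt_lim_id|].
    apply derivable_pt_lim_scal.
    apply (derivable_pt_lim_comp (fun t => 2 * PI * (y - t)) sin).
    + apply derivable_pt_lim_scal, derivable_pt_lim_minus;
        [apply derivable_pt_lim_const | apply derivable_pt_lim_id].
    + apply derivable_pt_lim_sin.
  - replace (- (2 * PI * k * cos (2 * PI * (y - x))))
      with (0 - k * (cos (2 * PI * (y - x)) * (2 * PI * (1 - 0)))) by ring.
    apply derivable_pt_lim_minus; [apply derivable_pt_lim_const|].
    apply derivable_pt_lim_scal.
    apply (derivable_pt_lim_comp (fun t => 2 * PI * (t - x)) sin).
    + apply derivable_pt_lim_scal, derivable_pt_lim_minus;
        [apply derivable_pt_lim_id | apply derivable_pt_lim_const].
    + apply derivable_pt_lim_sin.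
  - replace (-1) with (0 - 1) by ring. apply derivable_pt_lim_minus;
      [apply derivable_pt_lim_const | apply derivable_pt_lim_id].
  - replace 1 with (1 - 0) by ring. apply derivable_pt_lim_minus;
      [apply derivable_pt_lim_id | apply derivable_pt_lim_const].
Qed.

Definition delta_minus (k : R) : R :=
  / (2 * PI) * acos ((sqrt 3 - 1) / (4 * PI * k)).

(* At a unit vector (a, b) minimising |A u| on the unit circle, a b has the sign opposite
   to the off-diagonal entry of the Gram matrix A^T A whenever that entry is nonzero.
   For Df_k this entry is 1 + 4 pi k cos(2 pi y), positive as soon as cos(2 pi y) >= 0, which
   holds for y in [0, delta^-] \/ [1 - delta^-, 1] since delta^- <= 1/4; for D(f_k^-1) it is
   -(d^2 + d + 1) < 0 whatever d = 2 pi k cos(2 pi (y - x)) is.  Two vectors spanning the same line have products a b of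
   the same (weak) sign, so e^(1) and e^(-1) never coincide there, for every k > 0. *)

From Stdlib Require Import Reals Lra Psatz.
Open Scope R_scope.

Definition sqnorm2 (u : vec2) : R := fst u * fst u + snd u * snd u.

Definition gram_offdiag (A : mat2) : R :=
  let '(p, q, r, s) := A in p * q + r * s.

Lemma sqnorm2_ge0 u : 0 <= sqnorm2 u.
Proof. unfold sqnorm2; nra. Qed.

Lemma norm2_unit_sqnorm2 u : norm2 u = 1 -> sqnorm2 u = 1.
Proof.
  unfold norm2; intro Hu.
  rewrite <- (sqrt_sqrt _ (sqnorm2_ge0 u)); unfold sqnorm2; rewrite Hu; ring.
Qed.

Lemma sqnorm2_mat_apply_scale A (t : R) u :
  sqnorm2 (mat_apply A (t * fst u, t * snd u)) = t * t * sqnorm2 (mat_apply A u).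
Proof. destruct A as [[[p q] r] s]; unfold sqnorm2, mat_apply; simpl; ring. Qed.

Lemma most_contracted_le A v u :
  most_contracted A v -> sqnorm2 (mat_apply A v) * sqnorm2 u <= sqnorm2 (mat_apply A u).
Proof.
  intros [_ Hmin].
  destruct (Req_dec (sqnorm2 u) 0) as [Hu0 | Hu0].
  { rewrite Hu0, Rmult_0_r; apply sqnorm2_ge0. }
  assert (Hpos : 0 < sqnorm2 u) by (pose proof (sqnorm2_ge0 u); lra).
  set (t := / sqrt (sqnorm2 u)).
  assert (Ht2 : t * t * sqnorm2 u = 1).
  { unfold t; rewrite <- Rinv_mult, sqrt_sqrt by lra; field; lra. }
  assert (Hunit : norm2 (t * fst u, t * snd u) = 1).
  { unfold norm2; simpl; rewrite <- sqrt_1; f_equal; rewrite <- Ht2; unfold sqnorm2; ring. }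
  pose proof (Hmin _ Hunit) as Hle; unfold norm2 in Hle.
  fold (sqnorm2 (mat_apply A v)) in Hle.
  fold (sqnorm2 (mat_apply A (t * fst u, t * snd u))) in Hle.
  rewrite sqnorm2_mat_apply_scale in Hle.
  apply sqrt_le_0 in Hle; [| apply sqnorm2_ge0 | apply Rmult_le_pos; [nra | apply sqnorm2_ge0]].
  apply (Rmult_le_reg_l (t * t)); [nra|].
  replace (t * t * (sqnorm2 (mat_apply A v) * sqnorm2 u))
    with (sqnorm2 (mat_apply A v) * (t * t * sqnorm2 u)) by ring.
  rewrite Ht2; lra.
Qed.

Lemma quadratic_nonneg_linear_coef_eq0 c D :
  (forall t, 0 <= 2 * c * t + D * (t * t)) -> c = 0.
Proof.
  intro Hq.
  set (m := Rabs D + 1).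
  assert (Hm : 0 < m) by (unfold m; pose proof (Rabs_pos D); lra).
  assert (HD : D < 2 * m) by (unfold m; pose proof (Rle_abs D); pose proof (Rabs_pos D); lra).
  pose proof (Hq (- c / m)) as H.
  replace (2 * c * (- c / m) + D * (- c / m * (- c / m))) with (c * c * (D - 2 * m) / (m * m))
    in H by (field; lra).
  assert (Hcc : 0 <= c * c * (D - 2 * m)).
  { unfold Rdiv in H; apply (Rmult_le_reg_r (/ (m * m))); [apply Rinv_0_lt_compat; nra | lra]. }
  apply Rsqr_0_uniq; unfold Rsqr; nra.
Qed.

Lemma sqnorm2_mat_apply p q r s a b :
  sqnorm2 (mat_apply (p, q, r, s) (a, b))
  = (p * p + r * r) * (a * a) + 2 * (p * q + r * s) * (a * b) + (q * q + s * s) * (b * b).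
Proof. unfold sqnorm2, mat_apply; simpl; ring. Qed.

Lemma most_contracted_gram_offdiag_sign A v :
  most_contracted A v -> gram_offdiag A <> 0 -> gram_offdiag A * (fst v * snd v) < 0.
Proof.
  intros Hv Hc.
  pose proof (norm2_unit_sqnorm2 _ (proj1 Hv)) as Hunit.
  pose proof (fun u => most_contracted_le A v u Hv) as Hle.
  destruct A as [[[p q] r] s], v as [a b]; simpl in Hc |- *.
  unfold sqnorm2 in Hunit; simpl in Hunit.
  set (P := p * p + r * r) in *; set (S := q * q + s * s) in *; set (c := p * q + r * s) in *.
  assert (Hweak : c * (a * b) <= 0).
  { pose proof (Hle (a, - b)) as H.
    rewrite !sqnorm2_mat_apply in H; unfold sqnorm2 in H; simpl in *; fold P S c in H.
    replace (a * a + - b * - b) with 1 in H by (rewrite <- Hunit; ring); nra. }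
  destruct (Req_dec (a * b) 0) as [Hab | Hab]; [exfalso | nra].
  destruct (Rmult_integral _ _ Hab) as [Ha | Hb].
  - assert (Hcb : c * b = 0).
    { apply (quadratic_nonneg_linear_coef_eq0 _ (P - S)); intro t.
      pose proof (Hle (t, b)) as H.
      rewrite !sqnorm2_mat_apply in H; unfold sqnorm2 in H; simpl in *; fold P S c in H.
      subst a; assert (Hb2 : b * b = 1) by lra; rewrite Hb2 in H; lra. }
    apply Hc; fold c; apply (Rmult_eq_reg_r b); subst a; nra.
  - assert (Hca : c * a = 0).
    { apply (quadratic_nonneg_linear_coef_eq0 _ (S - P)); intro t.
      pose proof (Hle (a, t)) as H.
      rewrite !sqnorm2_mat_apply in H; unfold sqnorm2 in H; simpl in *; fold P S c in H.
      subst b; assert (Ha2 : a * a = 1) by lra; rewrite Ha2 in H; lra. }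
    apply Hc; fold c; apply (Rmult_eq_reg_r a); subst b; nra.
Qed.

Lemma same_line_sign v w :
  same_line v w -> 0 <= (fst v * snd v) * (fst w * snd w).
Proof.
  unfold same_line; intro H.
  replace ((fst v * snd v) * (fst w * snd w)) with ((fst v * snd w) * (fst v * snd w)) by
    (replace (fst v * snd w) with (snd v * fst w) at 2 by lra; ring).
  nra.
Qed.

Lemma most_contracted_not_same_line A B v w :
  most_contracted A v -> most_contracted B w ->
  0 < gram_offdiag A -> gram_offdiag B < 0 -> ~ same_line v w.
Proof.
  intros Hv Hw HA HB Hvw.
  pose proof (most_contracted_gram_offdiag_sign A v Hv ltac:(lra)) as Sv.
  pose proof (most_contracted_gram_offdiag_sign B w Hw ltac:(lra)) as Sw.
  pose proof (same_line_sign v w Hvw).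
  assert (fst v * snd v < 0) by nra.
  assert (0 < fst w * snd w) by nra.
  nra.
Qed.

Lemma delta_minus_bounds k : 0 < k -> 0 <= delta_minus k <= 1 / 4.
Proof.
  intro Hk; pose proof PI_RGT_0 as Hpi.
  set (u := (sqrt 3 - 1) / (4 * PI * k)).
  assert (Hu : 0 < u).
  { apply Rdiv_lt_0_compat; [| nra].
    assert (1 < sqrt 3) by (rewrite <- sqrt_1; apply sqrt_lt_1; lra); lra. }
  assert (Hacos : 0 <= acos u <= PI / 2).
  { split; [apply acos_bound|].
    rewrite acos_atan by exact Hu.
    pose proof (atan_bound (sqrt (1 - u²) / u)); lra. }
  unfold delta_minus; fold u; split.
  - apply Rmult_le_pos; [left; apply Rinv_0_lt_compat|]; lra.
  - apply (Rmult_le_reg_l (2 * PI)); [lra|]; field_simplify; lra.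
Qed.

Lemma cos_2PI_nonneg y : (0 <= y <= 1 / 4) \/ (3 / 4 <= y <= 1) -> 0 <= cos (2 * PI * y).
Proof.
  pose proof PI_RGT_0; intros [Hy | Hy].
  - apply cos_ge_0; nra.
  - replace (2 * PI * y) with ((2 * PI * y - 2 * PI) + 2 * INR 1 * PI) by (simpl; ring).
    rewrite cos_period; apply cos_ge_0; nra.
Qed.

Theorem mainTheorem7 :
  exists k0 : R, forall k : R, k0 < k ->
    forall x y : R, 0 <= x < 1 ->
      ((0 <= y <= delta_minus k) \/ (1 - delta_minus k <= y <= 1)) ->
      forall v w : vec2,
        most_contracted (Df k (x, y)) v ->
        most_contracted (Dfinv k (x, y)) w ->
        ~ same_line v w.
Proof.
  exists 0; intros k Hk x y _ Hy v w Hv Hw.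
  apply (most_contracted_not_same_line _ _ v w Hv Hw); simpl.
  - pose proof (delta_minus_bounds k Hk).
    assert (Hcos : 0 <= cos (2 * PI * y)) by (apply cos_2PI_nonneg; lra).
    pose proof PI_RGT_0.
    assert (0 <= 2 * PI * k * cos (2 * PI * y)) by (apply Rmult_le_pos; [nra | exact Hcos]).
    lra.
  - nra.
Qed.
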